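(* Let $\Sigma^2=\{0,1\}^{\mathbb{N}}$ with the metric $d(x,y)=0$ if $x=y$ and $d(x,y)=\frac1k$ if $x\neq y$, where $k=\min\{n\ge 0\mid x_n\ne y_n\}+1$, and let $\sigma:\Sigma^2\to\Sigma^2$ be the shift $\sigma(x_0x_1x_2\cdots)=x_1x_2\cdots$. Let $X\subset\Sigma^2$ be a nonempty set with $\sigma(X)\subset X$, equipped with the restricted metric. If $\sigma|_X$ is accessible, then $\sigma^2|_X$ is accessible.
   Context: A continuous map $f$ of a metric space $(X,d)$ into itself is accessible if for every $\epsilon>0$ and all nonempty open sets $U,V\subset X$ there exist $x\in U$, $y\in V$ and $n\in\mathbb{Z}^+=\{1,2,\dots\}$ with $d(f^n(x),f^n(y))<\epsilon$. Here $\mathbb{N}=\{0,1,2,\dots\}$ and open sets are open in $X$. *)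

From Stdlib Require Import Reals Lra Lia Classical ClassicalEpsilon.
Open Scope R_scope.

Definition Sigma2 := nat -> bool.

(* k - 1 = least index where x and y differ (only meaningful when x <> y). *)
Definition firstdiff (x y : Sigma2) : nat :=
  epsilon (inhabits 0%nat)
    (fun n => x n <> y n /\ forall m, (m < n)%nat -> x m = y m).

Definition d (x y : Sigma2) : R :=
  match excluded_middle_informative (x = y) with
  | left _ => 0
  | right _ => / INR (S (firstdiff x y))
  end.

Definition shift (x : Sigma2) : Sigma2 := fun n => x (S n).

Definition open_in (X U : Sigma2 -> Prop) : Prop :=
  (forall u, U u -> X u) /\
  forall u, U u -> exists eps, eps > 0 /\
    forall z, X z -> d u z < eps -> U z.

Definition accessible_on (X : Sigma2 -> Prop) (f : Sigma2 -> Sigma2) : Prop :=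
  forall eps, eps > 0 ->
  forall U V, open_in X U -> open_in X V ->
    (exists u, U u) -> (exists v, V v) ->
    exists x y n, U x /\ V y /\ (n >= 1)%nat /\
      d (Nat.iter n f x) (Nat.iter n f y) < eps.

(* If σ^n brings a point of U within 1/(N+1) of a point of V, the two orbits
   agree on coordinates 0..N at time n. For n even this is an iterate of σ^2;
   for n odd one more shift keeps them in agreement on coordinates 0..N-1, so
   σ^(n+1) still brings them within 1/(N+1). *)

From Stdlib Require Import Reals.
From Stdlib Require Import Lra Lia Classical ClassicalEpsilon FunctionalExtensionality.
Open Scope R_scope.

Lemma firstdiff_spec (x y : Sigma2) : x <> y ->
  x (firstdiff x y) <> y (firstdiff x y) /\
  forall m, (m < firstdiff x y)%nat -> x m = y m.
Proof.
  intros Hxy. unfold firstdiff. apply epsilon_spec.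
  assert (Hex : exists n, x n <> y n).
  { apply not_all_ex_not. intros H. apply Hxy. extensionality n. exact (H n). }
  destruct (Wf_nat.dec_inh_nat_subset_has_unique_least_element
              (fun n => x n <> y n) (fun n => classic _) Hex)
    as [n [[Hn Hmin] _]].
  exists n. split; [exact Hn|].
  intros m Hm. apply NNPP. intros Hneq. specialize (Hmin m Hneq). lia.
Qed.

Lemma inv_INR_succ_le (m n : nat) : (m <= n)%nat -> / INR (S n) <= / INR (S m).
Proof.
  intros Hmn. apply Rinv_le_contravar; [apply lt_0_INR; lia | apply le_INR; lia].
Qed.

Lemma d_le_of_agree (K : nat) (x y : Sigma2) :
  (forall m, (m < K)%nat -> x m = y m) -> d x y <= / INR (S K).
Proof.
  intros Hagree. unfold d. destruct (excluded_middle_informative (x = y)) as [_|Hxy].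
  - left. apply Rinv_0_lt_compat, lt_0_INR. lia.
  - destruct (firstdiff_spec x y Hxy) as [Hdiff _].
    apply inv_INR_succ_le.
    destruct (Nat.le_gt_cases K (firstdiff x y)) as [Hle|Hgt]; [exact Hle|].
    exfalso. exact (Hdiff (Hagree _ Hgt)).
Qed.

Lemma agree_of_d_lt (K : nat) (x y : Sigma2) :
  d x y < / INR (S K) -> forall m, (m <= K)%nat -> x m = y m.
Proof.
  intros Hd m Hm. unfold d in Hd.
  destruct (excluded_middle_informative (x = y)) as [->|Hxy]; [reflexivity|].
  destruct (firstdiff_spec x y Hxy) as [_ Hagree]. apply Hagree.
  destruct (Nat.le_gt_cases (firstdiff x y) K) as [Hle|Hgt]; [|lia].
  pose proof (inv_INR_succ_le _ _ Hle). lra.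
Qed.

Lemma d_shift_le (K : nat) (x y : Sigma2) :
  d x y < / INR (S K) -> d (shift x) (shift y) <= / INR (S K).
Proof.
  intros Hd. apply d_le_of_agree. intros m Hm.
  apply (agree_of_d_lt K x y Hd). lia.
Qed.

Lemma iter_twice {A : Type} (f : A -> A) (n : nat) (x : A) :
  Nat.iter n (fun z => f (f z)) x = Nat.iter (2 * n) f x.
Proof.
  induction n as [|n IHn]; [reflexivity|].
  replace (2 * S n)%nat with (S (S (2 * n))) by lia.
  simpl. rewrite IHn. reflexivity.
Qed.

Lemma exists_inv_INR_succ_lt (eps : R) : eps > 0 -> exists N, / INR (S N) < eps.
Proof.
  intros Heps. destruct (archimed_cor1 eps Heps) as [N [HN HN0]].
  destruct N as [|N]; [lia|].
  exists (S N). apply Rle_lt_trans with (/ INR (S N)); [apply inv_INR_succ_le; lia | exact HN].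
Qed.

Theorem lemma3p5 (X : Sigma2 -> Prop) :
  (exists x, X x) ->
  (forall x, X x -> X (shift x)) ->
  accessible_on X shift ->
  accessible_on X (fun x => shift (shift x)).
Proof.
  intros _ _ Hacc eps Heps U V HU HV HUne HVne.
  destruct (exists_inv_INR_succ_lt eps Heps) as [N HN].
  assert (Hpos : / INR (S N) > 0) by (apply Rinv_0_lt_compat, lt_0_INR; lia).
  destruct (Hacc _ Hpos U V HU HV HUne HVne) as [x [y [n [Ux [Vy [Hn Hd]]]]]].
  destruct (Nat.Even_or_Odd n) as [[m Hm]|[m Hm]].
  - exists x, y, m. repeat split; [exact Ux | exact Vy | lia |].
    rewrite !iter_twice, <- Hm. lra.
  - exists x, y, (S m). repeat split; [exact Ux | exact Vy | lia |].
    rewrite !iter_twice. replace (2 * S m)%nat with (S n) by lia.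
    rewrite !Nat.iter_succ.
    eapply Rle_lt_trans; [apply d_shift_le, Hd | exact HN].
Qed.
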